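(* Let $G$ be a finite group of order $n = n_1 n_2$ with $\gcd(n_1,n_2) = 1$ and $\gcd(n, \psi(n_1)) = 1$. Then the order of the maximal nilpotent factor group of $G$ is divisible by $n_1$.
   Context: $\psi$ is the multiplicative function with $\psi(p^k) = (p^k-1)(p^{k-1}-1)\cdots(p-1)$ for prime powers $p^k$. The maximal nilpotent factor group of $G$ is $G/B$, where $B$ is the intersection of all normal subgroups $M$ of $G$ such that $G/M$ is nilpotent. *)

From mathcomp Require Import all_boot all_fingroup all_solvable.
Set Implicit Arguments. Unset Strict Implicit. Unset Printing Implicit Defensive.
Open Scope group_scope.

Definition psi (n : nat) : nat :=
  \prod_(p <- primes n) \prod_(1 <= i < (logn p n).+1) (p ^ i - 1).

(* B = intersection of all normal M of G with G/M nilpotent;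
   the maximal nilpotent factor group of G is G / B. *)
Definition nil_residual (gT : finGroupType) (G : {group gT}) : {set gT} :=
  \bigcap_(M : {group gT} | (M <| G) && nilpotent (G / M)) M.

From mathcomp Require Import all_boot all_fingroup all_solvable.
From mathcomp Require Import ssralg.
Set Implicit Arguments. Unset Strict Implicit. Unset Printing Implicit Defensive.
Open Scope group_scope.

(* Fix a prime q dividing n1; the hypothesis makes |G| prime to q^i - 1 for
   all q^i dividing |G|.  If R is an r-subgroup of N_G(U), for a q-subgroup U
   and a prime r <> q, then |U| = q^a is congruent mod r to |C_U(R)| = q^c, so
   r divides q^(a-c) - 1 and R centralizes U.  Hence N_G(U)/C_G(U) is always a
   q-group, a Sylow q-subgroup P controls fusion in G, and the transfer of G
   into P/P' is nontrivial.  Induction gives a normal q-complement K; as G/K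
   is a q-group the nilpotent residual lies in K, so its index is divisible by
   |G|_q = (n1)_q. *)

Definition coprime_ppowers_pred p n :=
  forall i, 0 < i <= logn p n -> coprime n (p ^ i - 1).

Lemma coprime_ppowers_pred_dvd p m n :
  0 < n -> m %| n -> coprime_ppowers_pred p n -> coprime_ppowers_pred p m.
Proof.
move=> n_gt0 dv_mn copn i /andP[i_gt0 le_i]; apply: coprime_dvdl (dv_mn) _.
by apply: copn; rewrite i_gt0 (leq_trans le_i (dvdn_leq_log _ n_gt0 dv_mn)).
Qed.

Lemma dvdn_ppow_pred_psi p n i :
  prime p -> p %| n -> 0 < i <= logn p n -> p ^ i - 1 %| psi n.
Proof.
move=> p_pr p_dv_n /andP[i_gt0 le_i].
have n_gt0 : 0 < n by case: n {p_dv_n} le_i => //; rewrite logn0 leqNgt i_gt0.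
rewrite /psi (bigD1_seq p) ?primes_uniq ?mem_primes ?p_pr ?n_gt0 //=.
apply: dvdn_mulr; rewrite (@big_cat_nat _ _ _ i.+1) //= ?ltnS // big_nat_recr //=.
by apply: dvdn_mulr; apply: dvdn_mull.
Qed.

Lemma coprime_action_cent (gT : finGroupType) p q (U Q : {group gT}) :
  prime q -> p != q -> p.-group U -> q.-group Q -> Q \subset 'N(U) ->
  (forall i, 0 < i <= logn p #|U| -> ~~ (q %| p ^ i - 1)) ->
  Q \subset 'C(U).
Proof.
move=> q_pr pq pU qQ nUQ q'p_pred.
have [-> | ntU] := eqVneq U 1%G; first exact: cents1.
have [p_pr _ _] := pgroup_pdiv pU ntU.
have sCU : 'C_U(Q) \subset U := subsetIl _ _.
have actsQU : [acts Q, on U | 'J] by rewrite astabsJ.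
have := pgroup_fix_mod qQ actsQU; rewrite afixJ.
rewrite (card_pgroup pU) (card_pgroup (pgroupS sCU pU)).
set a := logn p #|U|; set c := logn p _ => fixU.
have le_ca : c <= a by apply: dvdn_leq_log; rewrite ?cardG_gt0 ?cardSg.
rewrite centsC; apply/setIidPl; apply/eqP; rewrite eqEcard subsetIl /=.
rewrite (card_pgroup pU) (card_pgroup (pgroupS sCU pU)) -/a -/c.
rewrite leq_exp2l ?prime_gt1 // leqNgt; apply/negP => lt_ca.
have copq : coprime q (p ^ c).
  by rewrite coprimeXr // prime_coprime // dvdn_prime2 // eq_sym.
have : q %| p ^ c * p ^ (a - c) - p ^ c.
  rewrite -eqn_mod_dvd ?leq_pmulr ?expn_gt0 ?prime_gt0 // -expnD subnKC //.
  exact/eqP.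
rewrite -[X in _ - X](muln1 (p ^ c)%N) -mulnBr Gauss_dvdr //.
by apply/negP/q'p_pred; rewrite subn_gt0 lt_ca leq_subr.
Qed.

Lemma norm_sub_cent_mul_Sylow (gT : finGroupType) p (G U S : {group gT}) :
  prime p -> coprime_ppowers_pred p #|G| -> U \subset G -> p.-group U ->
  p.-Sylow('N_G(U)) S -> 'N_G(U) \subset 'C_G(U) * S.
Proof.
move=> p_pr copG sUG pU sylS.
set M := 'N_G(U); set C := 'C_G(U).
have sSM : S \subset M := pHall_sub sylS.
have sMG : M \subset G := subsetIl _ _.
have nUM : M \subset 'N(U) := subsetIr _ _.
have nCS : S \subset 'N(C).
  rewrite normsI ?norms_cent ?(subset_trans sSM nUM) //.
  exact: subset_trans (subset_trans sSM sMG) (normG G).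
have sCM : C \subset M by rewrite setIS ?cent_sub.
rewrite -norm_joinEr //.
suff /eqP-> : C <*> S :==: M by [].
rewrite eqEcard join_subG sCM sSM /=.
apply: dvdn_leq; first exact: cardG_gt0.
apply/dvdn_partP => [|q]; first exact: cardG_gt0.
rewrite mem_primes => /and3P[q_pr _ q_dv_M].
have [Q sylQ] := Sylow_exists q M.
rewrite -(card_Hall sylQ).
have [eq_qp | qp] := eqVneq q p.
  rewrite eq_qp in sylQ.
  by rewrite (card_Hall sylQ) -(card_Hall sylS) cardSg ?joing_subr.
apply/cardSg/(subset_trans _ (joing_subl _ _)).
have sQM : Q \subset M := pHall_sub sylQ.
rewrite subsetI (subset_trans sQM sMG) /=.
apply: (coprime_action_cent q_pr _ pU (pHall_pgroup sylQ) (subset_trans sQM nUM)).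
  by rewrite eq_sym.
move=> i /andP[i_gt0 le_i]; rewrite -prime_coprime //.
apply: coprime_dvdl (dvdn_trans q_dv_M (cardSg sMG)) _; apply: copG.
by rewrite i_gt0 (leq_trans le_i) ?dvdn_leq_log ?cardG_gt0 ?cardSg.
Qed.

Definition conj_realized (gT : finGroupType) (P A : {set gT}) (g : gT) :=
  exists2 u, u \in P & {in A, forall a, a ^ g = a ^ u}.

Section ConjRealized.
Variables (gT : finGroupType) (P : {group gT}).

Lemma conj_realizedS (A B : {set gT}) g :
  B \subset A -> conj_realized P A g -> conj_realized P B g.
Proof. by move=> sBA [u Pu Au]; exists u => // b /(subsetP sBA)/Au. Qed.

Lemma conj_realizedM (A : {set gT}) g h :
  conj_realized P A g -> conj_realized P (A :^ g) h -> conj_realized P A (g * h).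
Proof.
move=> [u Pu Au] [v Pv Av]; exists (u * v); rewrite ?groupM // => a Aa.
by rewrite !conjgM -Au // Av ?memJ_conjg.
Qed.

Lemma conj_realizedV (A : {set gT}) g :
  conj_realized P A g -> conj_realized P (A :^ g) g^-1.
Proof.
move=> [u Pu Au]; exists u^-1; rewrite ?groupV // => _ /imsetP[a Aa ->].
by rewrite conjgK Au // conjgK.
Qed.

Lemma conj_realized_cent_mul (A : {set gT}) c u :
  c \in 'C(A) -> u \in P -> conj_realized P A (c * u).
Proof.
move=> cAc Pu; exists u => // a Aa.
by rewrite conjgM; congr (_ ^ u); apply/conjg_fixP/commgP/esym/(centP cAc).
Qed.

End ConjRealized.

Section SylowFusion.
Variables (gT : finGroupType) (p : nat) (G P : {group gT}).
Hypotheses (p_pr : prime p) (copG : coprime_ppowers_pred p #|G|).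
Hypothesis sylP : p.-Sylow(G) P.

Let sPG : P \subset G := pHall_sub sylP.
Let pP : p.-group P := pHall_pgroup sylP.

Lemma conj_realized_norm (B : {group gT}) n :
  B \subset P -> p.-Sylow('N_G(B)) 'N_P(B) -> n \in 'N_G(B) ->
  conj_realized P B n.
Proof.
move=> sBP sylNB NBn.
have sNCS := norm_sub_cent_mul_Sylow p_pr copG (subset_trans sBP sPG)
  (pgroupS sBP pP) sylNB.
have /mulsgP[c u /setIP[_ cBc] /setIP[Pu _] ->] := subsetP sNCS n NBn.
exact: conj_realized_cent_mul.
Qed.

Lemma exists_Sylow_normalizer_conjugate (A : {group gT}) :
  A \subset P -> exists B : {group gT}, exists2 h, h \in G &
    [/\ A :^ h = B, B \subset P & p.-Sylow('N_G(B)) 'N_P(B)].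
Proof.
move=> sAP.
pose conjP (B : {group gT}) := (B \subset P) && (gval B \in A :^: G).
have conjPA : conjP A by rewrite /conjP sAP; apply/imsetP; exists 1; rewrite ?conjsg1.
have [B /andP[sBP /imsetP[h Gh defB]] maxB] :=
  arg_maxnP (fun B : {group gT} => #|'N_P(B)|) conjPA.
exists B, h => //; split=> //.
have sNPB : 'N_P(B) \subset 'N_G(B) by apply: setSI.
have [T sylT sNT] := Sylow_superset sNPB (pgroupS (subsetIl _ _) pP).
have sTG : T \subset G := subset_trans (pHall_sub sylT) (subsetIl _ _).
have [k Gk sTkP] := Sylow_Jsub sylP sTG (pHall_pgroup sylT).
have sBT : B \subset T by apply: subset_trans sNT; rewrite subsetI sBP normG.
have conjPBk : conjP (B :^ k)%G.
  rewrite /conjP /= (subset_trans _ sTkP) ?conjSg //.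
  by apply/imsetP; exists (h * k); rewrite ?groupM // defB conjsgM.
have sTkN : T :^ k \subset 'N_P(B :^ k).
  by rewrite subsetI sTkP normJ conjSg (subset_trans (pHall_sub sylT)) ?subsetIr.
have leTN : #|T| <= #|'N_P(B)|.
  by rewrite -(cardJg T k); apply: leq_trans (subset_leq_card sTkN) (maxB _ conjPBk).
suff -> : 'N_P(B) = T by [].
by apply/eqP; rewrite eqEcard sNT leTN.
Qed.

Lemma conj_realized_to_Sylow_normalizer (A B : {group gT}) h :
  A \subset P -> B \subset P -> p.-Sylow('N_G(B)) 'N_P(B) ->
  h \in G -> A :^ h = B ->
  (forall g, g \in G -> 'N_P(A) :^ g \subset P -> conj_realized P 'N_P(A) g) ->
  conj_realized P A h.
Proof.
move=> sAP sBP sylNB Gh defB realizedN.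
have sNAB : 'N_P(A) :^ h \subset 'N_G(B).
  by rewrite -defB normJ -(conjGid Gh) -conjIg conjSg setSI.
have pNAh : p.-group ('N_P(A) :^ h) by rewrite pgroupJ (pgroupS (subsetIl _ _) pP).
have [x NBx sNAhx] := Sylow_Jsub sylNB sNAB pNAh.
have [Gx nBx] := setIP NBx.
have sANA : A \subset 'N_P(A) by rewrite subsetI sAP normG.
rewrite -(mulgK x h); apply: conj_realizedM.
  apply: conj_realizedS sANA (realizedN _ (groupM Gh Gx) _).
  by rewrite conjsgM (subset_trans sNAhx) ?subsetIl.
rewrite conjsgM defB (normP nBx).
by apply: conj_realized_norm; rewrite // groupV.
Qed.

Theorem Sylow_controls_fusion (A : {group gT}) g :
  A \subset P -> g \in G -> A :^ g \subset P -> conj_realized P A g.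
Proof.
have [k] := ubnP (#|P| - #|A|); elim: k A g => // k IHk A g ltPAk sAP Gg sAgP.
have [defA | neAP] := eqVneq A P.
  rewrite defA in sAgP *; apply: conj_realized_norm; rewrite ?(setIidPl (normG P)) //.
    by apply: pHall_subl sylP; rewrite ?subsetIl // subsetI sPG normG.
  by rewrite inE Gg; apply/normP/eqP; rewrite eqEcard sAgP cardJg /=.
have ltAP : A \proper P by rewrite properEneq neAP.
have realizedN (A' : {group gT}) : A' \proper P -> #|A'| = #|A| ->
    forall g', g' \in G -> 'N_P(A') :^ g' \subset P -> conj_realized P 'N_P(A') g'.
  move=> ltA'P oA' g' Gg' sNg'P.
  apply: (IHk 'N_P(A')%G) => //; last exact: subsetIl.
  have ltAN : #|A| < #|'N_P(A')|.
    by rewrite -oA' proper_card ?nilpotent_proper_norm ?(pgroup_nil pP).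
  by apply: leq_trans (ltn_sub2l (proper_card ltAP) ltAN) _; rewrite -ltnS.
have [B [h Gh [defB sBP sylNB]]] := exists_Sylow_normalizer_conjugate sAP.
have ltAgP : (A :^ g)%G \proper P by rewrite properEcard sAgP cardJg proper_card.
have realizedA := conj_realized_to_Sylow_normalizer sAP sBP sylNB Gh defB
  (realizedN _ ltAP erefl).
have defBg : (A :^ g) :^ (g^-1 * h) = B by rewrite -conjsgM mulKVg.
have realizedAg := conj_realized_to_Sylow_normalizer sAgP sBP sylNB
  (groupM (groupVr Gg) Gh) defBg (realizedN _ ltAgP (cardJg A g)).
rewrite -(mulKVg h g); apply: conj_realizedM realizedA _.
have -> : h^-1 * g = (g^-1 * h)^-1 by rewrite invMg invgK.
by rewrite defB -defBg; apply: conj_realizedV.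
Qed.

Let nP'P : P \subset 'N(P^`(1)) := der_norm 1 P.
Let to_Pab := restrm_morphism nP'P (coset_morphism P^`(1)).

Let abelian_Pab : abelian (to_Pab @* P).
Proof. by rewrite morphim_restrm setIid; apply: der_abelian 0 P. Qed.

Let fmodP := FiniteModule.fmod abelian_Pab.

(* P controls fusion, so in the cycle expansion of the transfer each factor
   [x * g ^+ n * x^-1] is P-conjugate to [g ^+ n] and has the same image in P/P'. *)
Lemma transfer_Sylow g :
  g \in P -> transfer G abelian_Pab g = (fmodP (to_Pab g) *+ #|G : P|)%R.
Proof.
move=> Pg; have Gg := subsetP sPG g Pg.
have toPabJ y u : y \in P -> u \in P -> to_Pab (y ^ u) = to_Pab y.
  move=> Py Pu; rewrite morphJ //.
  by apply/conjg_fixP/commgP/esym/(centsP abelian_Pab); apply: mem_morphim.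
have trX := transversalP (rcosets_cycle_partition sPG Gg).
rewrite (transfer_cycle_expansion sPG abelian_Pab Gg trX).
rewrite -(sum_index_rcosets_cycle sPG Gg trX) -GRing.sumrMnr.
apply: eq_bigr => x Xx; set n := #|<[g]> : P :* x|.
have Gx : x \in G := subsetP (transversal_sub trX) x Xx.
have Pgn : g ^+ n \in P by rewrite groupX.
have Pgnx : (g ^+ n) ^ x^-1 \in P.
  by have := mulg_exp_card_rcosets P g x; rewrite mem_rcoset conjgE invgK mulgA.
have [u Pu realized_u] : conj_realized P <[g ^+ n]> x^-1.
  by apply: Sylow_controls_fusion; rewrite ?cycle_subG ?groupV // -cycleJ cycle_subG.
rewrite realized_u ?cycle_id //.
change (fmodP (to_Pab ((g ^+ n) ^ u)) = fmodP (to_Pab g) *+ n)%R.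
rewrite toPabJ // morphX //.
by rewrite /fmodP FiniteModule.fmodX // mem_morphim.
Qed.

Lemma exists_proper_normal_pindex :
  P :!=: 1 -> exists K : {group gT}, [/\ K <| G, K \proper G & p.-nat #|G : K|].
Proof.
move=> ntP; pose tr := transfer_morphism G abelian_Pab.
have [_ [g Pg P'g]] :=
  properP (sol_der1_proper (nilpotent_sol (pgroup_nil pP)) (subxx P) ntP).
have Gg := subsetP sPG g Pg.
have tr_g : g \notin 'ker tr.
  apply: contra P'g => /(kerP tr Gg) tr_g1.
  have : FiniteModule.fmval (fmodP (to_Pab g) *+ #|G : P|)%R = 1.
    by rewrite -transfer_Sylow //; move: tr_g1 => /= ->.
  rewrite FiniteModule.fmvalZ /fmodP FiniteModule.fmodK ?mem_morphim // => to_g_exp1.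
  have p_to_g : p.-elt (to_Pab g).
    by apply: mem_p_elt (morphim_pgroup _ pP) _; apply: mem_morphim.
  have /eqP : #[to_Pab g] = 1%N.
    have [_ _ p'GP] := and3P sylP.
    by apply: (pnat_1 p_to_g); apply: pnat_dvd p'GP; rewrite order_dvdn to_g_exp1.
  by rewrite order_eq1 => /eqP; apply: coset_idr; apply: subsetP nP'P g Pg.
exists ('ker tr)%G; split; first exact: ker_normal.
  by apply/properP; split; [exact: subsetIl | exists g].
have -> : #|G : 'ker tr| = #|tr @* G| by rewrite card_morphim setIid.
apply: pnat_dvd (morphim_pgroup to_Pab pP).
apply: dvdn_trans (cardSg (subsetT (tr @* G))) _.
by rewrite cardsT card_sub (eq_card (B := to_Pab @* P)) // => x; rewrite inE.
Qed.

End SylowFusion.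

Theorem normal_pcomplement (gT : finGroupType) p (G : {group gT}) :
  prime p -> coprime_ppowers_pred p #|G| ->
  exists K : {group gT}, [/\ K <| G, p^'.-group K & p.-nat #|G : K|].
Proof.
move=> p_pr; have [n] := ubnP #|G|; elim: n G => // n IHn G ltGn copG.
have [P sylP] := Sylow_exists p G.
have [P1 | ntP] := eqVneq P 1%G.
  exists G; split; rewrite ?normal_refl ?indexgg //.
  by have [_ _] := and3P sylP; rewrite P1 indexg1.
have [K [nsKG ltKG pGK]] := exists_proper_normal_pindex p_pr copG sylP ntP.
have sKG := proper_sub ltKG.
have [M [nsMK p'M pKM]] : exists M : {group gT},
    [/\ M <| K, p^'.-group M & p.-nat #|K : M|].
  apply: IHn; first exact: leq_trans (proper_card ltKG) _.
  exact: coprime_ppowers_pred_dvd (cardG_gt0 G) (cardSg sKG) copG.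
have hallM : p^'.-Hall(K) M by rewrite /pHall normal_sub // p'M pnatNK.
exists M; split=> //.
  rewrite -(normal_Hall_pcore hallM nsMK).
  exact: char_normal_trans (pcore_char _ _) nsKG.
by rewrite -(Lagrange_index sKG (normal_sub nsMK)) pnatM pGK pKM.
Qed.

Section NilResidual.
Variables (gT : finGroupType) (G : {group gT}).

Lemma group_set_nil_residual : group_set (nil_residual G).
Proof. exact: group_set_bigcap. Qed.

Canonical nil_residual_group := Group group_set_nil_residual.

Lemma nil_residual_norm : G \subset 'N(nil_residual G).
Proof. by apply: norms_bigcap; apply/bigcapsP => M /andP[/normal_norm]. Qed.

Lemma nil_residual_sub (K : {group gT}) :
  K <| G -> nilpotent (G / K) -> nil_residual G \subset K.
Proof. by move=> nsKG nilGK; apply: bigcap_inf; rewrite nsKG. Qed.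

End NilResidual.

Theorem mainTheorem15 (gT : finGroupType) (G : {group gT}) (n1 n2 : nat) :
  #|G| = (n1 * n2)%N -> coprime n1 n2 -> coprime #|G| (psi n1) ->
  (n1 %| #|(G / nil_residual G)%g|)%N.
Proof.
move=> oG co12 copsi; have /andP[n1_gt0 n2_gt0] : (0 < n1) && (0 < n2).
  by rewrite -muln_gt0 -oG cardG_gt0.
rewrite card_quotient ?nil_residual_norm //.
apply/dvdn_partP => // q; rewrite mem_primes => /and3P[q_pr _ q_dv_n1].
have q'n2 : q^'.-nat n2 by rewrite p'natE // -prime_coprime // (coprime_dvdl q_dv_n1).
have n1_q : (n1`_q = #|G|`_q)%N by rewrite oG partnM // (part_p'nat q'n2) muln1.
have logG : logn q #|G| = logn q n1.
  by rewrite oG lognM // (logn_coprime (coprime_dvdl q_dv_n1 co12)) addn0.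
have copG : coprime_ppowers_pred q #|G|.
  move=> i i_range; apply: coprime_dvdr copsi.
  by apply: dvdn_ppow_pred_psi; rewrite // -logG.
have [K [nsKG q'K qGK]] := normal_pcomplement q_pr copG.
have sBK : nil_residual G \subset K.
  apply/nil_residual_sub/(pgroup_nil (p := q)) => //.
  by rewrite /pgroup card_quotient ?normal_norm.
rewrite n1_q -(Lagrange (normal_sub nsKG)) partnM ?cardG_gt0 //.
by rewrite (part_p'nat q'K) (part_pnat_id qGK) mul1n indexgS.
Qed.
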